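(* Let $\varphi:R\to S$ be a morphism of (unital) rings, let $\varphi_*:{}_S\mathcal{M}\to{}_R\mathcal{M}$ be the restriction of scalars functor and $\varphi^*=S\otimes_R\bullet:{}_R\mathcal{M}\to{}_S\mathcal{M}$ the extension of scalars functor. 1. $\varphi_*$ is naturally full if and only if it is full. 2. The following are equivalent: (a) $\varphi^*$ is naturally full; (b) there exists an $R$-bimodule map $E:S\to R$ such that $\varphi\circ E=\mathrm{id}_S$; (c) there exists a central idempotent $e$ of $R$ and a ring isomorphism $S\cong Re$ under which $\varphi$ corresponds to the projection $R\to Re$, $r\mapsto re$.
   Context: ${}_R\mathcal{M}$ denotes the category of left $R$-modules. For a functor $F:\mathcal{A}\to\mathcal{B}$, $F$ is called naturally full if there is a family of maps $\mathcal{P}_{A,A'}:\mathrm{Hom}_{\mathcal{B}}(F(A),F(A'))\to\mathrm{Hom}_{\mathcal{A}}(A,A')$, natural in $A$ and $A'$ (i.e. $\mathcal{P}_{X,T}(F(h)\circ g\circ F(f))=h\circ\mathcal{P}_{Y,Z}(g)\circ f$), such that $F(\mathcal{P}_{A,A'}(u))=u$ for all $u$. *)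

Set Warnings "-notation-overridden -ambiguous-paths -redundant-canonical-projection".
From HB Require Import structures.
From mathcomp Require Import all_boot all_algebra.
From mathcomp Require Import boolp.

Set Implicit Arguments.
Unset Strict Implicit.
Unset Printing Implicit Defensive.

Import GRing.Theory.
Local Open Scope ring_scope.

Definition full (A B : pzRingType) (F0 : lmodType A -> lmodType B)
  (F1 : forall M N : lmodType A, {linear M -> N} -> {linear F0 M -> F0 N}) :=
  forall (M N : lmodType A) (u : {linear F0 M -> F0 N}),
    exists f : {linear M -> N}, F1 M N f =1 u.

Definition naturally_full (A B : pzRingType) (F0 : lmodType A -> lmodType B)
  (F1 : forall M N : lmodType A, {linear M -> N} -> {linear F0 M -> F0 N}) :=
  exists P : forall M N : lmodType A, {linear F0 M -> F0 N} -> {linear M -> N},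
    (forall (X Y Z T : lmodType A) (f : {linear X -> Y})
            (g : {linear F0 Y -> F0 Z}) (h : {linear Z -> T}),
        P X T (F1 Z T h \o g \o F1 X Y f : {linear F0 X -> F0 T})
          =1 h \o P Y Z g \o f) /\
    (forall (M N : lmodType A) (u : {linear F0 M -> F0 N}),
        F1 M N (P M N u) =1 u).

Arguments full {A B} F0 F1.
Arguments naturally_full {A B} F0 F1.

Section Restriction.
Variables (R S : pzRingType) (phi : {rmorphism R -> S}).

Definition restr_type (M : lmodType S) : Type := M.

Section Obj.
Variable M : lmodType S.
HB.instance Definition _ := GRing.Zmodule.on (restr_type M).
Definition restr_scale (r : R) (m : restr_type M) : restr_type M := phi r *: (m : M).
Fact restr_scalerA a b v : restr_scale a (restr_scale b v) = restr_scale (a * b) v.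
Proof. by rewrite /restr_scale scalerA rmorphM. Qed.
Fact restr_scale1r : left_id 1 restr_scale.
Proof. by move=> v; rewrite /restr_scale rmorph1 scale1r. Qed.
Fact restr_scalerDr : right_distributive restr_scale +%R.
Proof. by move=> a u v; rewrite /restr_scale scalerDr. Qed.
Fact restr_scalerDl v : {morph restr_scale^~ v : a b / a + b}.
Proof. by move=> a b; rewrite /restr_scale rmorphD scalerDl. Qed.
HB.instance Definition _ := GRing.Zmodule_isLmodule.Build R (restr_type M)
  restr_scalerA restr_scale1r restr_scalerDr restr_scalerDl.
End Obj.

Definition restr (M : lmodType S) : lmodType R := restr_type M.

Section Mor.
Variables (M N : lmodType S) (f : {linear M -> N}).
Definition restr_fun : restr M -> restr N := fun m => f m.
Fact restr_fun_linear : linear restr_fun.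
Proof. by move=> r u v; rewrite /restr_fun /= linearP. Qed.
HB.instance Definition _ := GRing.isLinear.Build R (restr M) (restr N) _ restr_fun
  restr_fun_linear.
End Mor.

Definition restr_mor (M N : lmodType S) (f : {linear M -> N}) :
  {linear restr M -> restr N} := restr_fun f.

End Restriction.

(* Extension of scalars  S (x)_R M, built as the quotient of the free  *)
(* commutative monoid of formal sums  seq (S * M)  by the congruence   *)
(* generated by the usual defining relations of the tensor product:    *)
Section Extension.
Variables (R S : pzRingType) (phi : {rmorphism R -> S}).

Inductive tens_rel (M : lmodType R) : seq (S * M) -> seq (S * M) -> Prop :=
| tr_refl x : tens_rel x x
| tr_sym x y : tens_rel x y -> tens_rel y x
| tr_trans x y z : tens_rel x y -> tens_rel y z -> tens_rel x z
| tr_catl x y z : tens_rel x y -> tens_rel (z ++ x) (z ++ y)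
| tr_catr x y z : tens_rel x y -> tens_rel (x ++ z) (y ++ z)
| tr_swap a b : tens_rel [:: a; b] [:: b; a]
| tr_addl s1 s2 m : tens_rel [:: (s1 + s2, m)] [:: (s1, m); (s2, m)]
| tr_addr s m1 m2 : tens_rel [:: (s, m1 + m2)] [:: (s, m1); (s, m2)]
| tr_bal s r m : tens_rel [:: (s * phi r, m)] [:: (s, r *: m)]
| tr_zero m : tens_rel [:: (0, m)] [::].

Lemma tr_map (M N : lmodType R) (g : S * M -> S * N) :
  (forall s1 s2 m, tens_rel [:: g (s1 + s2, m)] [:: g (s1, m); g (s2, m)]) ->
  (forall s m1 m2, tens_rel [:: g (s, m1 + m2)] [:: g (s, m1); g (s, m2)]) ->
  (forall s r m, tens_rel [:: g (s * phi r, m)] [:: g (s, r *: m)]) ->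
  (forall m, tens_rel [:: g (0, m)] [::]) ->
  forall x y, tens_rel x y -> tens_rel (map g x) (map g y).
Proof.
move=> h1 h2 h3 h4 x y; elim=> /=.
- by move=> ?; apply: tr_refl.
- by move=> ? ? _; apply: tr_sym.
- by move=> ? ? ? _ H1 _ H2; apply: tr_trans H1 H2.
- by move=> ? ? z _ H; rewrite !map_cat; apply: tr_catl.
- by move=> ? ? z _ H; rewrite !map_cat; apply: tr_catr.
- by move=> ? ?; apply: tr_swap.
- by [].
- by [].
- by [].
- by [].
Qed.

Section Obj.
Variable M : lmodType R.
Local Notation X := (S * M)%type.
Local Notation tr := (@tens_rel M).

Lemma tr_consC (a : X) y : tr (a :: y) (y ++ [:: a]).
Proof.
elim: y => [|b y IH] /=; first exact: tr_refl.
apply: (@tr_trans _ _ (b :: a :: y)).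
  by apply: (@tr_catr _ [:: a; b] [:: b; a] y); apply: tr_swap.
by apply: (@tr_catl _ (a :: y) (y ++ [:: a]) [:: b]).
Qed.

Lemma tr_catC x y : tr (x ++ y) (y ++ x).
Proof.
elim: x => [|a x IH] /=; first by rewrite cats0; apply: tr_refl.
apply: (@tr_trans _ _ (a :: (y ++ x))).
  by apply: (@tr_catl _ _ _ [:: a]).
rewrite -cat1s catA; apply: (@tr_trans _ _ ((y ++ [:: a]) ++ x)).
  by apply: tr_catr; apply: tr_consC.
by rewrite -catA; apply: tr_refl.
Qed.

Definition tens_type := {A : seq X -> Prop | exists x, A = tr x}.

HB.instance Definition _ := gen_eqMixin tens_type.
HB.instance Definition _ := gen_choiceMixin tens_type.

Definition tcl (x : seq X) : tens_type := exist _ (tr x) (ex_intro _ x erefl).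
Definition trep (a : tens_type) : seq X := projT1 (cid (svalP a)).

Lemma trepK a : tcl (trep a) = a.
Proof.
rewrite /trep; case: cid => x /= e; case: a e => A pA /= e; subst A.
by rewrite /tcl; congr exist; apply: Prop_irrelevance.
Qed.

Lemma tcl_eq x y : tcl x = tcl y <-> tr x y.
Proof.
split.
  by move=> /(congr1 sval) /= e; rewrite e; apply: tr_refl.
move=> H; rewrite /tcl; have e : tr x = tr y.
  apply: funext => z; apply: propext; split => Hz.
    by apply: tr_trans (tr_sym H) Hz.
  by apply: tr_trans H Hz.
by move: (ex_intro _ x _); rewrite e => ?; congr exist; apply: Prop_irrelevance.
Qed.

Lemma tens_ind (P : tens_type -> Prop) : (forall x, P (tcl x)) -> forall a, P a.
Proof. by move=> H a; rewrite -(trepK a). Qed.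

Lemma trep_tcl x : tr (trep (tcl x)) x.
Proof. by apply/tcl_eq; rewrite trepK. Qed.

Definition tadd a b := tcl (trep a ++ trep b).
Definition tzero := tcl [::].
Definition topp a := tcl (map (fun p : X => (- p.1, p.2)) (trep a)).
Definition tscale (s : S) a := tcl (map (fun p : X => (s * p.1, p.2)) (trep a)).

Lemma taddE x y : tadd (tcl x) (tcl y) = tcl (x ++ y).
Proof.
apply/tcl_eq; apply: tr_trans (tr_catr _ (trep_tcl x)) _.
exact: tr_catl (trep_tcl y).
Qed.

Lemma toppE x : topp (tcl x) = tcl (map (fun p : X => (- p.1, p.2)) x).
Proof.
apply/tcl_eq; apply: tr_map (trep_tcl x) => /=.
- by move=> s1 s2 m; rewrite opprD; apply: tr_addl.
- by move=> s m1 m2; apply: tr_addr.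
- by move=> s r m; rewrite -mulNr; apply: tr_bal.
- by move=> m; rewrite oppr0; apply: tr_zero.
Qed.

Lemma tscaleE s x : tscale s (tcl x) = tcl (map (fun p : X => (s * p.1, p.2)) x).
Proof.
apply/tcl_eq; apply: tr_map (trep_tcl x) => /=.
- by move=> s1 s2 m; rewrite mulrDr; apply: tr_addl.
- by move=> s' m1 m2; apply: tr_addr.
- by move=> s' r m; rewrite mulrA; apply: tr_bal.
- by move=> m; rewrite mulr0; apply: tr_zero.
Qed.

Fact taddA : associative tadd.
Proof.
by elim/tens_ind=> x; elim/tens_ind=> y; elim/tens_ind=> z; rewrite !taddE catA.
Qed.
Fact taddC : commutative tadd.
Proof. by elim/tens_ind=> x; elim/tens_ind=> y; rewrite !taddE; apply/tcl_eq/tr_catC. Qed.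
Fact tadd0 : left_id tzero tadd.
Proof. by elim/tens_ind=> x; rewrite /tzero taddE. Qed.

HB.instance Definition _ := GRing.isNmodule.Build tens_type taddA taddC tadd0.

Fact taddN : left_inverse tzero topp tadd.
Proof.
elim/tens_ind=> x; elim: x => [|[s m] x IH].
  by rewrite toppE /= /tzero taddE.
rewrite toppE /= -cat1s -taddE -toppE (_ : (s, m) :: x = [:: (s, m)] ++ x) // -taddE.
change (tadd ?u ?w) with (u + w) in IH |- *.
rewrite addrACA IH; change tzero with (0 : tens_type); rewrite addr0.
change (?u + ?w) with (tadd u w); rewrite taddE /=; apply/tcl_eq.
apply: tr_trans (tr_sym (tr_addl _ _ _)) _.
by rewrite addNr; apply: tr_zero.
Qed.

HB.instance Definition _ := GRing.Nmodule_isZmodule.Build tens_type taddN.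

Fact tscaleA a b v : tscale a (tscale b v) = tscale (a * b) v.
Proof. by elim/tens_ind: v => x; rewrite !tscaleE -map_comp; congr tcl; apply: eq_map => -[? ?] /=; rewrite mulrA. Qed.
Fact tscale1 : left_id 1 tscale.
Proof. by elim/tens_ind=> x; rewrite tscaleE; congr tcl; rewrite -[RHS]map_id; apply: eq_map => -[? ?] /=; rewrite mul1r. Qed.
Fact tscaleDr : right_distributive tscale +%R.
Proof. by move=> s; elim/tens_ind=> x; elim/tens_ind=> y; rewrite /GRing.add /= taddE !tscaleE taddE map_cat. Qed.
Fact tscaleDl v : {morph tscale^~ v : a b / a + b}.
Proof.
move=> a b; elim/tens_ind: v => x; elim: x => [|[s m] x IH].
  by rewrite !tscaleE /= /GRing.add /= taddE.
rewrite -cat1s -taddE; change (tadd ?u ?w) with (u + w).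
have D c u w : tscale c (u + w) = tscale c u + tscale c w by apply: tscaleDr.
rewrite !D IH addrACA; congr (_ + _); rewrite !tscaleE /= /GRing.add /= taddE.
by apply/tcl_eq; rewrite mulrDl; apply: tr_addl.
Qed.

HB.instance Definition _ := GRing.Zmodule_isLmodule.Build S tens_type
  tscaleA tscale1 tscaleDr tscaleDl.
End Obj.

Definition ext (M : lmodType R) : lmodType S := tens_type M.

Section Mor.
Variables (M N : lmodType R) (f : {linear M -> N}).
Definition ext_fun (a : ext M) : ext N :=
  tcl (map (fun p : S * M => (p.1, f p.2)) (trep a)).

Lemma ext_funE x : ext_fun (tcl x) = tcl (map (fun p : S * M => (p.1, f p.2)) x).
Proof.
apply/tcl_eq; apply: tr_map (trep_tcl x) => /=.
- by move=> s1 s2 m; apply: tr_addl.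
- by move=> s m1 m2; rewrite linearD; apply: tr_addr.
- by move=> s r m; rewrite linearZ; apply: tr_bal.
- by move=> m; apply: tr_zero.
Qed.

Fact ext_fun_linear : linear ext_fun.
Proof.
move=> s; elim/tens_ind=> x; elim/tens_ind=> y.
rewrite /GRing.add /GRing.scale /= tscaleE taddE ext_funE !ext_funE tscaleE taddE.
by rewrite map_cat -!map_comp.
Qed.

HB.instance Definition _ := GRing.isLinear.Build S (ext M) (ext N) _ ext_fun
  ext_fun_linear.
End Mor.

Definition ext_mor (M N : lmodType R) (f : {linear M -> N}) :
  {linear ext M -> ext N} := ext_fun f.

End Extension.

Set Warnings "-notation-overridden -ambiguous-paths -redundant-canonical-projection".
From HB Require Import structures.
From mathcomp Require Import all_boot all_algebra.
From mathcomp Require Import boolp.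
Import GRing.Theory.
Local Open Scope ring_scope.
Set Implicit Arguments.
Unset Strict Implicit.
Unset Printing Implicit Defensive.

(* Restriction of scalars does not change the underlying maps, so it is
   faithful and any choice of preimages is automatically natural.

   If [E : S -> R] is an R-bimodule map with [phi \o E = id], the contractions
   [S (x)_R N -> N, s (x) n |-> E(s) n] are R-linear, natural in [N], and
   split by [n |-> 1 (x) n], since [1 (x) E(s) n = phi (E s) (x) n = s (x) n];
   hence [u |-> contraction \o u \o (1 (x) -)] is a natural preimage.
   Conversely, [S (x)_R R] is free on [1 (x) 1], so right multiplication by [s]
   is an S-linear endomorphism of it; a natural preimage [P] turns it into an
   element [E s := P (. * s) 1] of [R], and naturality with respect to the right
   multiplications of [R] makes [E] R-bilinear.

   Finally [e := E 1] is a central idempotent, [E] maps [S] isomorphically onto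
   the corner ring [R e], and [E (phi r) = r e]. *)

Lemma linear_funext (R : pzRingType) (U V : lmodType R) (f g : {linear U -> V}) :
  f =1 g -> f = g.
Proof.
move=> /funext; case: f => f cf; case: g => g cg /= efg; subst g.
congr GRing.Linear.Pack; case: cf cg => [[a] [b]] [[c] [d]].
by f_equal; f_equal; apply: Prop_irrelevance.
Qed.

Lemma naturally_full_full (A B : pzRingType) (F0 : lmodType A -> lmodType B)
    (F1 : forall M N : lmodType A, {linear M -> N} -> {linear F0 M -> F0 N}) :
  naturally_full F0 F1 -> full F0 F1.
Proof. by case=> P [_ PK] M N u; exists (P M N u); apply: PK. Qed.

Lemma full_restr_naturally_full (R S : pzRingType) (phi : {rmorphism R -> S}) :
  full (restr phi) (restr_mor phi) -> naturally_full (restr phi) (restr_mor phi).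
Proof.
move=> restr_full; exists (fun M N u => projT1 (cid (restr_full M N u))); split.
- move=> X Y Z T f g h x /=; case: cid => w /= Pw; case: cid => v /= Pv.
  by have := Pw x; have := Pv (f x); rewrite /restr_mor /restr_fun /= => <- <-.
- by move=> M N u; case: cid.
Qed.

Section BimoduleSection.
Variables (R S : pzRingType) (phi : {rmorphism R -> S}).

Definition bimod_section (E : S -> R) :=
  (forall x y : S, E (x + y) = E x + E y) /\
  (forall (r : R) (s : S), E (phi r * s) = r * E s) /\
  (forall (s : S) (r : R), E (s * phi r) = E s * r) /\
  (forall s : S, phi (E s) = s).

Definition corner_iso (e : R) (psi : S -> R) :=
  (forall x y : S, psi (x + y) = psi x + psi y) /\
  (forall x y : S, psi (x * y) = psi x * psi y) /\
  psi 1 = e /\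
  injective psi /\
  (forall s : S, psi s * e = psi s) /\
  (forall r : R, exists s : S, psi s = r * e) /\
  (forall r : R, psi (phi r) = r * e).

Lemma bimod_section_iff_corner_iso :
  (exists E, bimod_section E) <->
  exists e : R, e * e = e /\ (forall r : R, r * e = e * r) /\
    exists psi, corner_iso e psi.
Proof.
split.
  case=> E [ED [EL [ER EK]]].
  have E_phil r : E (phi r) = r * E 1 by rewrite -[phi r]mulr1 EL.
  have E_phir r : E (phi r) = E 1 * r by rewrite -[phi r]mul1r ER.
  exists (E 1); split; first by rewrite -E_phil EK.
  split; first by move=> r; rewrite -E_phil -E_phir.
  exists E; do ![split] => //.
  - by move=> x y; rewrite -{1}(EK x) EL.
  - by move=> x y /(congr1 phi); rewrite !EK.
  - by move=> s; rewrite -ER EK mulr1.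
  - by move=> r; exists (phi r).
case=> e [_ [e_central [psi [psiD [psiM [_ [psi_inj [psi_e [_ psi_phi]]]]]]]]].
have psiK s : phi (psi s) = s by apply: psi_inj; rewrite psi_phi psi_e.
exists psi; do ![split] => //.
- by move=> r s; rewrite psiM psi_phi -mulrA -e_central psi_e.
- by move=> s r; rewrite psiM psi_phi e_central mulrA psi_e.
Qed.

End BimoduleSection.

Section ExtensionOfScalars.
Variables (R S : pzRingType) (phi : {rmorphism R -> S}).

Definition tens (M : lmodType R) (s : S) (m : M) : ext phi M := tcl phi [:: (s, m)].

Section Module.
Variable M : lmodType R.
Implicit Types (s : S) (m : M) (x : seq (S * M)).

Lemma tclD x y : (tcl phi x + tcl phi y : ext phi M) = tcl phi (x ++ y).
Proof. exact: taddE. Qed.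

Lemma tcl_cons s m x : tcl phi ((s, m) :: x) = tens s m + tcl phi x.
Proof. by rewrite tclD. Qed.

Lemma ext_ind (P : ext phi M -> Prop) :
  P 0 -> (forall s m, P (tens s m)) -> (forall a b, P a -> P b -> P (a + b)) ->
  forall a, P a.
Proof.
move=> P0 Ptens PD; elim/tens_ind => x; elim: x => [|[s m] x IHx]; first exact: P0.
by rewrite tcl_cons; apply: PD.
Qed.

Lemma tensZ c s m : c *: tens s m = tens (c * s) m.
Proof. exact: tscaleE. Qed.

Lemma tens_bal s r m : tens (s * phi r) m = tens s (r *: m).
Proof. exact/tcl_eq/tr_bal. Qed.

Lemma tensDr s m1 m2 : tens s (m1 + m2) = tens s m1 + tens s m2.
Proof. by rewrite tclD; apply/tcl_eq/tr_addr. Qed.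

Lemma tens0 m : tens 0 m = 0.
Proof. exact/tcl_eq/tr_zero. Qed.

Lemma tensr0 s : tens s (0 : M) = 0.
Proof. by rewrite -(scale0r (0 : M)) -tens_bal rmorph0 mulr0 tens0. Qed.

End Module.

Lemma ext_mor_tens (M N : lmodType R) (f : {linear M -> N}) s m :
  ext_mor phi f (tens s m) = tens s (f m).
Proof. exact: ext_funE. Qed.

Lemma ext_mor_id (M : lmodType R) (a : ext phi M) : ext_mor phi idfun a = a.
Proof.
elim/ext_ind: a => [|s m|a b IHa IHb]; first exact: linear0.
  by rewrite ext_mor_tens.
by rewrite linearD IHa IHb.
Qed.

Section Lift.
Variables (M : lmodType R) (V : zmodType) (g : S -> M -> V).
Hypotheses (gDl : forall s1 s2 m, g (s1 + s2) m = g s1 m + g s2 m)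
  (gDr : forall s m1 m2, g s (m1 + m2) = g s m1 + g s m2)
  (g_bal : forall s r m, g (s * phi r) m = g s (r *: m)).

Definition ext_lift (a : ext phi M) : V := \sum_(p <- trep a) g p.1 p.2.

Lemma ext_lift_tcl x : ext_lift (tcl phi x) = \sum_(p <- x) g p.1 p.2.
Proof.
have g0 m : g 0 m = 0.
  by have := gDl 0 0 m; rewrite addr0 => /esym/eqP; rewrite -subr_eq0 addrK => /eqP.
suff sum_rel y z : tens_rel phi y z ->
    \sum_(p <- y) g p.1 p.2 = \sum_(p <- z) g p.1 p.2 by exact: sum_rel (trep_tcl phi x).
elim => //=.
- by move=> ? ? ? _ -> _ ->.
- by move=> ? ? ? _ e; rewrite !big_cat /= e.
- by move=> ? ? ? _ e; rewrite !big_cat /= e.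
- by move=> a b; rewrite !big_cons !big_nil !addr0 addrC.
- by move=> s1 s2 m; rewrite !big_cons !big_nil /= gDl !addr0.
- by move=> s m1 m2; rewrite !big_cons !big_nil /= gDr !addr0.
- by move=> s r m; rewrite !big_cons !big_nil /= g_bal.
- by move=> m; rewrite !big_cons !big_nil /= g0 addr0.
Qed.

Lemma ext_lift_tens s m : ext_lift (tens s m) = g s m.
Proof. by rewrite ext_lift_tcl big_seq1. Qed.

Lemma ext_lift0 : ext_lift 0 = 0.
Proof. by rewrite ext_lift_tcl big_nil. Qed.

Lemma ext_liftD a b : ext_lift (a + b) = ext_lift a + ext_lift b.
Proof.
elim/tens_ind: a => x; elim/tens_ind: b => y.
by rewrite tclD !ext_lift_tcl big_cat.
Qed.

End Lift.

Section BimodSectionNaturallyFull.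
Variable E : S -> R.
Hypothesis E_section : bimod_section phi E.

Definition ext_unit (M : lmodType R) (m : M) : ext phi M := tens 1 m.

Definition ext_contract (N : lmodType R) (a : ext phi N) : N :=
  ext_lift (fun s n => E s *: n) a.

Section Contract.
Variable N : lmodType R.
Implicit Types (s : S) (n : N) (a b : ext phi N).

Let contract_Dl s1 s2 n : E (s1 + s2) *: n = E s1 *: n + E s2 *: n.
Proof. by case: E_section => ED _; rewrite ED scalerDl. Qed.
Let contract_Dr s n1 n2 : E s *: (n1 + n2) = E s *: n1 + E s *: n2.
Proof. exact: scalerDr. Qed.
Let contract_bal s r n : E (s * phi r) *: n = E s *: (r *: n).
Proof. by case: E_section => _ [_ [ER _]]; rewrite ER scalerA. Qed.

Lemma ext_contract_tens s n : ext_contract (tens s n) = E s *: n.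
Proof. exact: ext_lift_tens contract_Dl contract_Dr contract_bal s n. Qed.

Lemma ext_contractD a b : ext_contract (a + b) = ext_contract a + ext_contract b.
Proof. exact: ext_liftD contract_Dl contract_Dr contract_bal a b. Qed.

Lemma ext_contract0 : ext_contract (0 : ext phi N) = 0.
Proof. exact: ext_lift0 contract_Dl contract_Dr contract_bal. Qed.

Lemma ext_contractZ r a : ext_contract (phi r *: a) = r *: ext_contract a.
Proof.
case: E_section => _ [EL _].
elim/ext_ind: a => [|s n|a b IHa IHb]; first by rewrite scaler0 ext_contract0 scaler0.
  by rewrite tensZ !ext_contract_tens EL scalerA.
by rewrite scalerDr !ext_contractD IHa IHb scalerDr.
Qed.

Lemma ext_contractK : cancel (@ext_contract N) (@ext_unit N).
Proof.
case: E_section => _ [_ [_ EK]].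
elim/ext_ind => [|s n|a b IHa IHb]; first by rewrite ext_contract0 /ext_unit tensr0.
  by rewrite ext_contract_tens /ext_unit -tens_bal mul1r EK.
by rewrite ext_contractD /ext_unit tensDr -!/(ext_unit _) IHa IHb.
Qed.

End Contract.

Lemma ext_contract_nat (M N : lmodType R) (h : {linear M -> N}) (a : ext phi M) :
  ext_contract (ext_mor phi h a) = h (ext_contract a).
Proof.
elim/ext_ind: a => [|s m|a b IHa IHb]; first by rewrite linear0 !ext_contract0 linear0.
  by rewrite ext_mor_tens !ext_contract_tens linearZ.
by rewrite linearD !ext_contractD IHa IHb linearD.
Qed.

Lemma ext_unitP (M : lmodType R) r (m m' : M) :
  ext_unit (r *: m + m') = phi r *: ext_unit m + ext_unit m'.
Proof. by rewrite /ext_unit tensDr -tens_bal tensZ mul1r mulr1. Qed.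

Section Preimage.
Variables (M N : lmodType R) (u : {linear ext phi M -> ext phi N}).

Definition ext_preim_fun (m : M) : N := ext_contract (u (ext_unit m)).

Fact ext_preim_fun_linear : linear ext_preim_fun.
Proof.
by move=> r m m'; rewrite /ext_preim_fun ext_unitP linearP ext_contractD ext_contractZ.
Qed.

HB.instance Definition _ :=
  GRing.isLinear.Build R M N _ ext_preim_fun ext_preim_fun_linear.

Definition ext_preim : {linear M -> N} := ext_preim_fun.

End Preimage.

Lemma bimod_section_ext_naturally_full : naturally_full (ext phi) (ext_mor phi).
Proof.
exists ext_preim; split.
  move=> X Y Z T f g h m; rewrite /= /ext_preim_fun /ext_unit /=.
  by rewrite -/(ext_mor phi f _) ext_mor_tens -/(ext_mor phi h _) ext_contract_nat.
move=> M N u; elim/ext_ind => [|s m|a b IHa IHb]; first by rewrite !linear0.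
  rewrite ext_mor_tens /= /ext_preim_fun -[s]mulr1 -!tensZ linearZ.
  by rewrite -/(ext_unit (ext_contract _)) ext_contractK.
by rewrite !linearD IHa IHb.
Qed.

End BimodSectionNaturallyFull.

Section NaturallyFullBimodSection.
Local Notation Ro := (R^o : lmodType R).
Local Notation SR := (ext phi Ro).

Definition ext_mult (a : SR) : S := ext_lift (fun s (r : Ro) => s * phi r) a.

Let mult_Dl s1 s2 (r : Ro) : (s1 + s2) * phi r = s1 * phi r + s2 * phi r.
Proof. exact: mulrDl. Qed.
Let mult_Dr s (r1 r2 : Ro) : s * phi (r1 + r2) = s * phi r1 + s * phi r2.
Proof. by rewrite rmorphD mulrDr. Qed.
Let mult_bal s r (r' : Ro) : s * phi r * phi r' = s * phi (r *: r').
Proof. by rewrite -mulrA -rmorphM. Qed.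

Lemma ext_mult_tens s (r : Ro) : ext_mult (tens s r) = s * phi r.
Proof. exact: ext_lift_tens mult_Dl mult_Dr mult_bal s r. Qed.

Lemma ext_multD a b : ext_mult (a + b) = ext_mult a + ext_mult b.
Proof. exact: ext_liftD mult_Dl mult_Dr mult_bal a b. Qed.

Lemma ext_mult0 : ext_mult 0 = 0.
Proof. exact: ext_lift0 mult_Dl mult_Dr mult_bal. Qed.

Lemma ext_multZ c a : ext_mult (c *: a) = c * ext_mult a.
Proof.
elim/(@ext_ind Ro): a => [|s r|a b IHa IHb]; first by rewrite scaler0 ext_mult0 mulr0.
  by rewrite tensZ !ext_mult_tens mulrA.
by rewrite scalerDr !ext_multD IHa IHb mulrDr.
Qed.

Lemma ext_multK a : ext_mult a *: tens 1 (1 : Ro) = a.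
Proof.
elim/(@ext_ind Ro): a => [|s r|a b IHa IHb]; first by rewrite ext_mult0 scale0r.
  by rewrite ext_mult_tens tensZ mulr1 tens_bal /GRing.scale /= mulr1.
by rewrite ext_multD scalerDl IHa IHb.
Qed.

Definition ext_mulr_fun (s : S) (a : SR) : SR := (ext_mult a * s) *: tens 1 (1 : Ro).

Fact ext_mulr_fun_linear s : linear (ext_mulr_fun s).
Proof.
by move=> c a b; rewrite /ext_mulr_fun ext_multD ext_multZ mulrDl scalerDl scalerA mulrA.
Qed.

HB.instance Definition _ s :=
  GRing.isLinear.Build S SR SR _ (ext_mulr_fun s) (ext_mulr_fun_linear s).

Definition ext_mulr (s : S) : {linear SR -> SR} := ext_mulr_fun s.

Definition mulr_op_fun (r : R) (x : Ro) : Ro := x * r.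

Fact mulr_op_fun_linear r : linear (mulr_op_fun r).
Proof. by move=> c a b; rewrite /mulr_op_fun mulrDl /GRing.scale /= mulrA. Qed.

HB.instance Definition _ r :=
  GRing.isLinear.Build R Ro Ro _ (mulr_op_fun r) (mulr_op_fun_linear r).

Definition mulr_op (r : R) : {linear Ro -> Ro} := mulr_op_fun r.

Lemma ext_mult_mulr_op r a : ext_mult (ext_mor phi (mulr_op r) a) = ext_mult a * phi r.
Proof.
elim/(@ext_ind Ro): a => [|s x|a b IHa IHb]; first by rewrite linear0 ext_mult0 mul0r.
  by rewrite ext_mor_tens !ext_mult_tens /= /mulr_op_fun rmorphM mulrA.
by rewrite linearD !ext_multD IHa IHb mulrDl.
Qed.

Lemma ext_mulr_phil r s :
  ext_mulr (phi r * s) =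
  (ext_mor phi idfun \o ext_mulr s \o ext_mor phi (mulr_op r) : {linear SR -> SR}).
Proof.
apply: linear_funext => a /=.
by rewrite ext_mor_id /ext_mulr_fun ext_mult_mulr_op mulrA.
Qed.

Lemma ext_mulr_phir s r :
  ext_mulr (s * phi r) =
  (ext_mor phi (mulr_op r) \o ext_mulr s \o ext_mor phi idfun : {linear SR -> SR}).
Proof.
apply: linear_funext => a /=.
rewrite ext_mor_id /ext_mulr_fun linearZ /= -[ext_mor _ _ _]ext_multK.
by rewrite ext_mult_mulr_op ext_mult_tens (rmorph1 phi) !mul1r scalerA mulrA.
Qed.

Lemma ext_naturally_full_bimod_section :
  naturally_full (ext phi) (ext_mor phi) -> exists E, bimod_section phi E.
Proof.
case=> P [P_nat PK].
pose E s : R := P Ro Ro (ext_mulr s) 1.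
have EK s : phi (E s) = s.
  have := congr1 ext_mult (PK _ _ (ext_mulr s) (tens 1 (1 : Ro))).
  rewrite ext_mor_tens !ext_mult_tens mul1r /= /ext_mulr_fun ext_multZ.
  by rewrite ext_mult_tens rmorph1 !mul1r mulr1.
have EL r s : E (phi r * s) = r * E s.
  rewrite /E ext_mulr_phil P_nat /= /mulr_op_fun mul1r.
  by rewrite -[r in LHS]mulr1 -[r * 1]/(r *: (1 : Ro)) linearZ.
have ER s r : E (s * phi r) = E s * r by rewrite /E ext_mulr_phir P_nat.
have E_phi r : E (phi r) = r * E 1 by rewrite -[phi r]mulr1 EL.
have E_idem s : E s * E 1 = E s by rewrite -E_phi EK.
exists E; do ![split] => // x y.
by rewrite -{1}(EK x) -{1}(EK y) -rmorphD E_phi mulrDl !E_idem.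
Qed.

End NaturallyFullBimodSection.

End ExtensionOfScalars.

Theorem proposition3p1 (R S : pzRingType) (phi : {rmorphism R -> S}) :
  (* 1. restriction of scalars phi_* : S-Mod -> R-Mod *)
  (naturally_full (restr phi) (restr_mor phi) <-> full (restr phi) (restr_mor phi))
  /\
  (* 2. (a) <-> (b) for extension of scalars phi^* = S (x)_R - : R-Mod -> S-Mod *)
  (naturally_full (ext phi) (ext_mor phi) <->
     exists E : S -> R,
       (forall x y : S, E (x + y) = E x + E y) /\
       (forall (r : R) (s : S), E (phi r * s) = r * E s) /\
       (forall (s : S) (r : R), E (s * phi r) = E s * r) /\
       (forall s : S, phi (E s) = s))
  /\
  (* 2. (b) <-> (c) *)
  ((exists E : S -> R,
       (forall x y : S, E (x + y) = E x + E y) /\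
       (forall (r : R) (s : S), E (phi r * s) = r * E s) /\
       (forall (s : S) (r : R), E (s * phi r) = E s * r) /\
       (forall s : S, phi (E s) = s)) <->
   exists e : R,
     e * e = e /\ (forall r : R, r * e = e * r) /\
     exists psi : S -> R,
       (* psi is a ring isomorphism from S onto the ring R e (unit e) *)
       (forall x y : S, psi (x + y) = psi x + psi y) /\
       (forall x y : S, psi (x * y) = psi x * psi y) /\
       psi 1 = e /\
       injective psi /\
       (forall s : S, psi s * e = psi s) /\
       (forall r : R, exists s : S, psi s = r * e) /\
       (* under which phi corresponds to the projection r |-> r e *)
       (forall r : R, psi (phi r) = r * e)).
Proof.
split; first by split; [exact: naturally_full_full | exact: full_restr_naturally_full].
split; last exact: bimod_section_iff_corner_iso.
split; first exact: ext_naturally_full_bimod_section.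
by case=> E; exact: bimod_section_ext_naturally_full.
Qed.
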